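(* Let $p$ be an odd prime, $x\in\mathbb Z_p$ and $x\not\equiv0\pmod p$. Then $$\sum_{k=0}^{\frac{p-1}2}\binom{2k}k^2\Big(\frac x4\Big)^{2k}\equiv\Big(\frac{-x}p\Big)P_{\frac{p-1}2}\Big(\frac{x+x^{-1}}2\Big)\pmod p.$$
   Context: $\mathbb Z_p$ denotes the set of rational numbers whose denominator (in lowest terms) is prime to $p$; congruences are in this ring. For $a\in\mathbb Z_p$, $\big(\frac ap\big)$ is the Legendre symbol of the residue of $a$ modulo $p$. $P_n(x)$ is the $n$-th Legendre polynomial, defined by $\frac1{\sqrt{1-2xt+t^2}}=\sum_{n\ge0}P_n(x)t^n$, equivalently $P_n(x)=\frac1{2^n}\sum_{k=0}^{[n/2]}\frac{(-1)^k(2n-2k)!}{k!(n-k)!(n-2k)!}x^{n-2k}$. *)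

From HB Require Import structures.
From mathcomp Require Import all_boot all_order all_algebra.
Set Implicit Arguments. Unset Strict Implicit. Unset Printing Implicit Defensive.
Import Order.TTheory GRing.Theory Num.Theory.
Local Open Scope ring_scope.

(* Z_p : rationals whose denominator (in lowest terms) is prime to p. *)
Definition in_Zp (p : nat) (q : rat) : bool := coprime `|denq q|%N p.

Definition congr_p (p : nat) (a b : rat) : bool := in_Zp p ((a - b) / p%:R).

Definition legendre_rat (p : nat) (a : rat) : int :=
  if congr_p p a 0 then 0
  else if [exists y : 'I_p, congr_p p ((nat_of_ord y)%:R ^+ 2) a] then 1
  else -1.

Definition legendreP (n : nat) : {poly rat} :=
  (2%:R ^+ n)^-1 *:
  \sum_(k < n./2.+1)
     (((-1) ^+ k * ((2 * n - 2 * k)`!)%:R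
        / ((k`!)%:R * ((n - k)`!)%:R * ((n - 2 * k)`!)%:R)) *: 'X^(n - 2 * k)).

(* Everything is reduced modulo p = 2n + 1, to the field F_p, where x becomes some y <> 0.
   There (2m)! (n-m)! = (-4)^m m! n!, hence C(2k,k) = (-4)^k C(n,k) and the left-hand side
   is sum_k C(n,k)^2 y^(2k), while Euler's criterion turns the Legendre symbol into (-y)^n.
   The same factorial congruence simplifies the coefficients of P_n, and the identity
   sum_j C(n,j)^2 z^j = sum_k C(n,2k) C(2k,k) z^k (1+z)^(n-2k) matches the two sides term
   by term with z = y^2. *)

From HB Require Import structures.
From mathcomp Require Import all_boot all_order all_algebra all_field.
From mathcomp Require Import ring zify.
Import Order.TTheory GRing.Theory Num.Theory.
Local Open Scope ring_scope.
Set Implicit Arguments. Unset Strict Implicit. Unset Printing Implicit Defensive.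

Lemma big_ord_narrow_idx (R : Type) (idx : R) (op : Monoid.law idx) a b (F : nat -> R) :
  (a <= b)%N -> (forall k, (a <= k)%N -> F k = idx) ->
  \big[op/idx]_(k < b) F k = \big[op/idx]_(k < a) F k.
Proof.
move=> ab Fidx; rewrite -!(big_mkord xpredT) (big_cat_nat _ (n := a)) //=.
by rewrite [X in op _ X]big1_seq ?Monoid.mulm1 // => k /=; rewrite mem_index_iota => /andP[/Fidx].
Qed.

Lemma sum_bin_mul_bin j m N : (minn j m < N)%N ->
  (\sum_(k < N) 'C(j, k) * 'C(m, k) = 'C(j + m, m))%N.
Proof.
have vanish k : (minn j m < k)%N -> ('C(j, k) * 'C(m, k) = 0)%N.
  by rewrite gtn_min => /orP[] /bin_small ->; rewrite ?muln0.
pose F k := ('C(j, k) * 'C(m, k))%N.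
move=> ltN; rewrite (big_ord_narrow_idx addn (a := (minn j m).+1) (F := F)) //.
rewrite -(big_ord_narrow_idx addn (b := m.+1) (F := F)) ?ltnS ?geq_minr // -binomial.Vandermonde.
by apply: eq_bigr => k _; rewrite /F bin_sub // -ltnS.
Qed.

Lemma bin_central_trinomial n j k : (2 * k <= n)%N -> (j <= n)%N ->
  ('C(n, 2 * k) * 'C(2 * k, k) * (if (k <= j)%N then 'C(n - 2 * k, j - k) else 0)
   = 'C(n, j) * ('C(j, k) * 'C(n - j, k)))%N.
Proof.
move=> kn jn; have [kj|jk] := leqP k j; last by rewrite (@bin_small j) // !muln0.
have [jkn|njk] := leqP (j + k) n; last first.
  by rewrite (@bin_small (n - j)) 1?(@bin_small (n - 2 * k)) ?muln0 //; lia.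
have fact_neq0 m : (m`!%:R : rat) != 0 by rewrite pnatr_eq0 -lt0n fact_gt0.
have binE a b : (b <= a)%N -> ('C(a, b)%:R : rat) = a`!%:R / (b`!%:R * (a - b)`!%:R).
  by move=> ba; rewrite -(bin_fact ba) !natrM mulfK // mulf_neq0.
apply/eqP; rewrite -(eqr_nat rat) !natrM !binE //; try lia.
have -> : (2 * k - k = k)%N by lia.
have -> : (n - 2 * k - (j - k) = n - j - k)%N by lia.
by apply/eqP; field; rewrite !fact_neq0.
Qed.

Lemma expr_exp1D_sum (R : comPzRingType) (z : R) k m N : (k + m <= N)%N ->
  z ^+ k * (1 + z) ^+ m =
  \sum_(j < N.+1) (if (k <= j)%N then 'C(m, j - k) else 0)%:R * z ^+ j.
Proof.
move=> kmN; pose F j := (if (k <= j)%N then 'C(m, j - k) else 0)%:R * z ^+ j.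
rewrite (big_ord_narrow_idx _ (a := (k + m).+1) (F := F)) ?ltnS //; last first.
  by move=> j kmj; rewrite /F ifT ?bin_small ?mul0r //; lia.
rewrite -(big_mkord xpredT) (big_cat_nat _ (n := k)) //=; last lia.
rewrite big1_seq ?add0r => [|j]; last first.
  by rewrite mem_index_iota /F => /andP[_ /andP[_ jk]]; rewrite leqNgt jk mul0r.
rewrite -[X in \sum_(X <= _ < _) _](add0n k) big_addn subSn ?leq_addr // addKn big_mkord.
rewrite addrC exprD1n big_distrr /=.
by apply: eq_bigr => i _; rewrite /F leq_addl addnK exprD mulr_natl mulrnAr mulrC.
Qed.

Lemma sum_bin_sqr_exp1D (R : comPzRingType) (z : R) n :
  \sum_(j < n.+1) ('C(n, j) ^ 2)%:R * z ^+ j =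
  \sum_(k < n./2.+1) ('C(n, 2 * k) * 'C(2 * k, k))%:R * (z ^+ k * (1 + z) ^+ (n - 2 * k)).
Proof.
have k2n (k : 'I_n./2.+1) : (2 * k <= n)%N by rewrite mul2n -geq_half_double -ltnS.
transitivity (\sum_(k < n./2.+1) \sum_(j < n.+1) ('C(n, 2 * k) * 'C(2 * k, k) *
    (if (k <= j)%N then 'C(n - 2 * k, j - k) else 0))%:R * z ^+ j); last first.
  apply: eq_bigr => k _; rewrite (@expr_exp1D_sum _ z k (n - 2 * k) n) ?big_distrr //=.
    by apply: eq_bigr => j _; rewrite natrM mulrA.
  by have := k2n k; lia.
(* Coefficients of z^j: trinomial revision, then Vandermonde's convolution. *)
rewrite exchange_big /=; apply: eq_bigr => j _.
have jn : (j <= n)%N by rewrite -ltnS.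
rewrite -mulr_suml -natr_sum; congr (_%:R * _).
rewrite (eq_bigr _ (fun k _ => bin_central_trinomial (k2n k) jn)) -big_distrr /=.
by rewrite sum_bin_mul_bin ?subnKC ?bin_sub ?mulnn //; rewrite ltnS geq_half_double; lia.
Qed.

Lemma scaled_legendre_term (R : fieldType) (y c : R) n k :
  2%:R != 0 :> R -> y != 0 -> (2 * k <= n)%N ->
  (- y) ^+ n * ((2%:R ^+ n)^-1 *
     ((-1) ^+ n * 4%:R ^+ (n - k) * c * ((y + y^-1) / 2%:R) ^+ (n - 2 * k)))
  = c * ((y ^+ 2) ^+ k * (1 + y ^+ 2) ^+ (n - 2 * k)).
Proof.
move=> two0 y0 kn.
transitivity (y ^+ n * ((2%:R ^+ n)^-1 *
    (4%:R ^+ (n - k) * c * ((1 + y ^+ 2) / y / 2%:R) ^+ (n - 2 * k)))).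
  have -> : y ^+ n = (- y) ^+ n * (-1) ^+ n by rewrite -exprMn mulrN1 opprK.
  have -> : y + y^-1 = (1 + y ^+ 2) / y by field.
  by ring.
have [j ->] : exists j, n = (j + 2 * k)%N by exists (n - 2 * k)%N; lia.
have -> : (j + 2 * k - k = j + k)%N by lia.
have -> : 4%:R = 2%:R * 2%:R :> R by rewrite -natrM.
rewrite addnK !expr_div_n !exprMn !exprD.
by field; rewrite ?expf_neq0.
Qed.

Definition central_bin_sqr_sum (R : fieldType) (n : nat) (t : R) : R :=
  \sum_(k < n.+1) ('C(2 * k, k)%:R) ^+ 2 * (t / 4%:R) ^+ (2 * k).

Definition legendre_sum (R : fieldType) (n : nat) (t : R) : R :=
  (2%:R ^+ n)^-1 * \sum_(k < n./2.+1)
     ((-1) ^+ k * (2 * n - 2 * k)`!%:R / (k`!%:R * (n - k)`!%:R * (n - 2 * k)`!%:R)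
      * t ^+ (n - 2 * k)).

Lemma horner_legendreP n (t : rat) : (legendreP n).[t] = legendre_sum n t.
Proof.
rewrite /legendreP hornerZ horner_sum; congr (_ * _).
by apply: eq_bigr => k _; rewrite hornerZ hornerXn.
Qed.

Section PrimeField.
Variable p : nat.
Hypothesis p_prime : prime p.
Local Notation F := 'F_p.

Lemma natr_Fp_eq0 m : ((m%:R : F) == 0) = (p %| m)%N.
Proof. by rewrite (dvdn_pcharf (pchar_Fp p_prime)). Qed.

Lemma natr_Fp_neq0 m : (0 < m < p)%N -> (m%:R : F) != 0.
Proof. by case/andP=> m0 mp; rewrite natr_Fp_eq0; apply/negP => /(dvdn_leq m0); lia. Qed.

Lemma fact_Fp_neq0 m : (m < p)%N -> (m`!%:R : F) != 0.
Proof.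
elim: m => [|m IHm] mp; first by rewrite oner_eq0.
by rewrite factS natrM mulf_neq0 ?IHm ?natr_Fp_neq0 //; lia.
Qed.

Lemma natr_Fp_inj i j : (i < p)%N -> (j < p)%N -> (i%:R : F) = j%:R -> i = j.
Proof. by move=> ip jp /(congr1 val); rewrite /= !val_Fp_nat // !modn_small. Qed.

Lemma Fp_fermat (a : F) : a != 0 -> a ^+ p.-1 = 1.
Proof.
move=> a0; apply: (mulfI a0); rewrite mulr1 -exprS prednK ?prime_gt0 //.
by have := expf_card a; rewrite card_Fp.
Qed.

Definition red (q : rat) : F := (numq q)%:~R / (denq q)%:~R.

Definition reduces (q : rat) (u : F) := in_Zp p q /\ red q = u.

Lemma in_ZpE q : in_Zp p q = ((denq q)%:~R != 0 :> F).
Proof.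
by rewrite /in_Zp coprime_sym prime_coprime // -(dvdz_pcharf (pchar_Fp p_prime)).
Qed.

Lemma reduces_frac q (m d : int) :
  (d%:~R : F) != 0 -> q = m%:~R / d%:~R -> reduces q (m%:~R / d%:~R).
Proof.
move=> dF qE; have dQ : (d%:~R : rat) != 0.
  by apply: contraNneq dF => /eqP; rewrite intr_eq0 => /eqP ->.
have eqZ : numq q * d = m * denq q.
  by apply: (@intr_inj rat); rewrite !intrM numqE qE mulrAC divfK.
have den_dvd : (`|denq q| %| `|d|)%N.
  have : (`|denq q| %| `|numq q| * `|d|)%N by rewrite -abszM eqZ abszM dvdn_mull.
  by rewrite Gauss_dvdr // coprime_sym coprime_num_den.
have qZ : in_Zp p q.
  rewrite in_ZpE -(dvdz_pcharf (pchar_Fp p_prime)); apply: contra dF => pd.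
  by rewrite -(dvdz_pcharf (pchar_Fp p_prime)); apply: dvdn_trans pd den_dvd.
split=> //; move: (qZ); rewrite in_ZpE => dqF.
by rewrite /red; apply/eqP; rewrite eqr_div // -!intrM eqZ.
Qed.

Lemma reduces_uniq a u v : reduces a u -> reduces a v -> u = v.
Proof. by move=> [_ <-] [_ <-]. Qed.

Lemma reduces_int (z : int) : reduces z%:~R z%:~R.
Proof. by have := @reduces_frac z%:~R z 1; rewrite !divr1; apply. Qed.

Lemma reduces_nat m : reduces m%:R m%:R.
Proof. exact: (reduces_int m). Qed.

Lemma reducesD a b u v : reduces a u -> reduces b v -> reduces (a + b) (u + v).
Proof.
move=> [aZ <-] [bZ <-]; move: aZ bZ; rewrite !in_ZpE => aF bF.
have dQ (q : rat) : (denq q)%:~R != 0 :> rat by rewrite intr_eq0 denq_neq0.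
rewrite /red addf_div // -!intrM -intrD; apply: reduces_frac; first by rewrite intrM mulf_neq0.
by rewrite -[a in LHS]divq_num_den -[b in LHS]divq_num_den addf_div // intrD !intrM.
Qed.

Lemma reducesM a b u v : reduces a u -> reduces b v -> reduces (a * b) (u * v).
Proof.
move=> [aZ <-] [bZ <-]; move: aZ bZ; rewrite !in_ZpE => aF bF.
rewrite /red mulf_div -!intrM; apply: reduces_frac; first by rewrite intrM mulf_neq0.
by rewrite -[a in LHS]divq_num_den -[b in LHS]divq_num_den mulf_div !intrM.
Qed.

Lemma reducesN a u : reduces a u -> reduces (- a) (- u).
Proof. by move/(reducesM (reduces_int (-1))); rewrite !mulrN1z !mulN1r. Qed.

Lemma reducesX a u k : reduces a u -> reduces (a ^+ k) (u ^+ k).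
Proof.
move=> au; elim: k => [|k IHk]; first exact: (reduces_nat 1).
by rewrite !exprS; apply: reducesM.
Qed.

Lemma reducesV a u : reduces a u -> u != 0 -> reduces a^-1 u^-1.
Proof.
move=> [aZ <-]; move: (aZ); rewrite in_ZpE => aF au0.
have nF : (numq a)%:~R != 0 :> F by apply: contraNneq au0; rewrite /red => ->; rewrite mul0r.
rewrite /red invf_div; apply: reduces_frac => //.
by rewrite -[a in LHS]divq_num_den invf_div.
Qed.

Lemma reduces_sum I (r : seq I) (P : pred I) (A : I -> rat) (U : I -> F) :
  (forall i, P i -> reduces (A i) (U i)) ->
  reduces (\sum_(i <- r | P i) A i) (\sum_(i <- r | P i) U i).
Proof.
move=> AU; apply: (big_ind2 reduces) => //; first exact: (reduces_nat 0).
by move=> *; apply: reducesD.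
Qed.

Lemma congr_p_reduces a b u v : reduces a u -> reduces b v -> congr_p p a b = (u == v).
Proof.
move=> au bv; have := reducesD au (reducesN bv); rewrite /congr_p -subr_eq0.
set c := a - b; set w := u - v => cw.
have p0 : (p%:R : rat) != 0 by rewrite pnatr_eq0 -lt0n prime_gt0.
apply/idP/eqP => [cpZ | w0].
  have := reducesM (conj cpZ erefl) (reduces_nat p).
  by rewrite divfK // pchar_Fp_0 // mulr0; apply: reduces_uniq.
case: cw => cZ; move: (cZ); rewrite in_ZpE /red w0 => dF /eqP.
rewrite mulf_eq0 invr_eq0 (negbTE dF) orbF -(dvdz_pcharf (pchar_Fp p_prime)) => pn.
have [] := @reduces_frac (c / p%:R) (numq c %/ p%:Z)%Z (denq c) dF => //.
rewrite -[c in LHS]divq_num_den -{1}(divzK pn) intrM mulrAC.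
by congr (_ / _); rewrite mulfK.
Qed.

Variable n : nat.
Hypothesis pE : p = (2 * n).+1.

Lemma fact_Fp_neq0_le m : (m <= n)%N -> (m`!%:R : F) != 0.
Proof. by move=> mn; apply: fact_Fp_neq0; lia. Qed.

Lemma sqr_Fp_uniq : uniq [seq ((i.+1)%:R : F) ^+ 2 | i <- iota 0 n].
Proof.
rewrite map_inj_in_uniq ?iota_uniq // => i j; rewrite !mem_iota !add0n => ilt jlt /eqP.
rewrite -subr_eq0 subr_sqr mulf_eq0 subr_eq0 => /orP[/eqP /natr_Fp_inj|]; try lia.
by rewrite -natrD (negbTE (natr_Fp_neq0 _)) //; lia.
Qed.

Lemma Fp_euler_criterion (a : F) : a != 0 ->
  a ^+ n = if [exists y : 'I_p, (y : nat)%:R ^+ 2 == a] then 1 else -1.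
Proof.
have p1E : p.-1 = (2 * n)%N by rewrite pE.
have sqr_n_1 (b : F) : b != 0 -> (b ^+ 2) ^+ n = 1.
  by move=> b0; rewrite -exprM -p1E Fp_fermat.
move=> a0; case: ifP => [/existsP[y /eqP ya]|nonsq].
  by rewrite -ya sqr_n_1 //; apply: contraNneq a0 => y0; rewrite -ya y0 expr0n.
have /eqP : (a ^+ n - 1) * (a ^+ n + 1) = 0.
  by rewrite -subr_sqr expr1n -exprM mulnC -p1E Fp_fermat // subrr.
rewrite mulf_eq0 subr_eq0 addr_eq0 => /orP[/eqP an1|/eqP //]; exfalso.
have n_gt0 : (0 < n)%N by have := prime_gt1 p_prime; lia.
(* Otherwise a, 1^2, ..., n^2 would be n + 1 distinct roots of X^n - 1. *)
pose rs := a :: [seq ((i.+1)%:R : F) ^+ 2 | i <- iota 0 n].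
suff : (size rs < size ('X^n - 1%:P : {poly F})%R)%N.
  by rewrite size_XnsubC //= size_map size_iota ltnn.
apply: max_poly_roots => /=.
- by rewrite -size_poly_eq0 size_XnsubC.
- rewrite /root !hornerE an1 subrr eqxx /=; apply/allP => z /mapP[i].
  rewrite mem_iota => /andP[_ ilt] ->.
  by rewrite /root !hornerE sqr_n_1 ?subrr ?natr_Fp_neq0 //; lia.
rewrite sqr_Fp_uniq andbT; apply/mapP => -[i]; rewrite mem_iota add0n => /andP[_ ilt] ai.
move/negbT/negP: nonsq; apply; apply/existsP.
have ip : (i.+1 < p)%N by lia.
by exists (Ordinal ip); rewrite /= ai.
Qed.

Lemma natr_Fp_odd m : (m <= n)%N -> ((2 * m).+1%:R : F) = - (2 * (n - m))%:R.
Proof.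
move=> mn; apply/eqP; rewrite -subr_eq0 opprK -natrD.
have -> : ((2 * m).+1 + 2 * (n - m) = p)%N by lia.
by rewrite pchar_Fp_0.
Qed.

Lemma Fp_fact_double m : (m <= n)%N ->
  ((2 * m)`!%:R * (n - m)`!%:R : F) = (- 4%:R) ^+ m * m`!%:R * n`!%:R.
Proof.
elim: m => [|m IHm] mn; first by rewrite muln0 fact0 subn0 expr0 !mul1r.
have nmS : (n - m = (n - m.+1).+1)%N by lia.
have nm0 : ((n - m)%:R : F) != 0 by apply: natr_Fp_neq0; lia.
apply: (mulIf nm0); transitivity
    ((2 * m).+2%:R * (2 * m).+1%:R * ((2 * m)`!%:R * (n - m)`!%:R) : F).
  by rewrite nmS mulnS add2n !factS !natrM; ring.
rewrite IHm ?(ltnW mn) // natr_Fp_odd ?(ltnW mn) //.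
have -> : ((2 * m).+2 = 2 * m.+1)%N by lia.
by rewrite factS exprS !natrM; ring.
Qed.

Lemma Fp_bin_central k : (k <= n)%N ->
  ('C(2 * k, k)%:R : F) = (- 4%:R) ^+ k * 'C(n, k)%:R.
Proof.
move=> kn; apply: (mulIf (x := (k`! * k`! * (n - k)`!)%:R)).
  by rewrite !natrM !mulf_neq0 ?fact_Fp_neq0_le ?leq_subr.
have := bin_fact (leq_addl k k); rewrite addnK addnn -mul2n => central.
transitivity (((2 * k)`! * (n - k)`!)%:R : F); first by rewrite -central !natrM; ring.
by rewrite natrM Fp_fact_double // -(bin_fact kn) !natrM; ring.
Qed.

Lemma Fp_two_neq0 : (2%:R : F) != 0.
Proof. by apply: natr_Fp_neq0; have := prime_gt1 p_prime; lia. Qed.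

Lemma Fp_four_neq0 : (4%:R : F) != 0.
Proof. by rewrite -[4%N]/(2 * 2)%N natrM mulf_neq0 ?Fp_two_neq0. Qed.

Lemma Fp_legendre_coef k : (2 * k <= n)%N ->
  ((-1) ^+ k * (2 * n - 2 * k)`!%:R / (k`!%:R * (n - k)`!%:R * (n - 2 * k)`!%:R) : F)
  = (-1) ^+ n * 4%:R ^+ (n - k) * ('C(n, 2 * k) * 'C(2 * k, k))%:R.
Proof.
move=> kn; have kfact0 : (k`!%:R : F) != 0 by apply: fact_Fp_neq0_le; lia.
set D := (k`!%:R * (n - k)`!%:R * (n - 2 * k)`!%:R : F).
have D0 : D != 0 by rewrite /D !mulf_neq0 ?fact_Fp_neq0_le ?leq_subr //; lia.
have := Fp_fact_double (leq_subr k n); rewrite subKn -?mulnBr; last lia.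
move=> double; apply: (mulIf kfact0).
transitivity ((-1) ^+ k / D * ((2 * (n - k))`!%:R * k`!%:R) : F); first by ring.
have := bin_fact (leq_addl k k); rewrite addnK addnn -mul2n => central.
rewrite double -(bin_fact kn) -central !natrM.
transitivity ((-1) ^+ k * (- 4%:R) ^+ (n - k) * ('C(n, 2 * k) * 'C(2 * k, k))%:R
  * k`!%:R * (D / D) : F); first by rewrite /D natrM; ring.
have -> : (- 4%:R : F) = -1 * 4%:R by rewrite mulN1r.
rewrite divff // mulr1 exprMn -[in (-1) ^+ n](subnKC (_ : k <= n)%N) ?exprD; last lia.
ring.
Qed.

Lemma legendre_rat_Fp a u : reduces a u -> u != 0 ->
  ((legendre_rat p a)%:~R : F) = u ^+ n.
Proof.
move=> au u0; rewrite /legendre_rat (congr_p_reduces au (reduces_nat 0)).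
rewrite (negbTE u0) Fp_euler_criterion //.
have -> : [exists y : 'I_p, congr_p p ((y : nat)%:R ^+ 2) a] =
          [exists y : 'I_p, (y : nat)%:R ^+ 2 == u].
  apply: eq_existsb => y.
  exact: congr_p_reduces (reducesX 2 (reduces_nat y)) au.
by case: ifP.
Qed.

Lemma Fp_central_bin_sqr_sum (y : F) : y != 0 ->
  central_bin_sqr_sum n y = (- y) ^+ n * legendre_sum n ((y + y^-1) / 2%:R).
Proof.
move=> y0.
transitivity (\sum_(j < n.+1) ('C(n, j) ^ 2)%:R * (y ^+ 2) ^+ j).
  apply: eq_bigr => j _; rewrite Fp_bin_central; last by rewrite -ltnS.
  rewrite exprMn -!exprM !(mulnC _ 2) !exprM sqrrN expr_div_n mulrAC -exprMn.
  by rewrite [4%:R ^+ 2 * _]mulrC divfK ?expf_neq0 ?Fp_four_neq0 // natrX mulrC.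
rewrite sum_bin_sqr_exp1D /legendre_sum mulr_sumr mulr_sumr; apply: eq_bigr => k _.
have k2n : (2 * k <= n)%N by rewrite mul2n -geq_half_double -ltnS.
by rewrite Fp_legendre_coef // scaled_legendre_term ?Fp_two_neq0.
Qed.

Lemma reduces_central_bin_sqr_sum x y :
  reduces x y -> reduces (central_bin_sqr_sum n x) (central_bin_sqr_sum n y).
Proof.
move=> xy; apply: reduces_sum => k _; apply: reducesM; first exact: reducesX (reduces_nat _).
exact: reducesX (reducesM xy (reducesV (reduces_nat 4) Fp_four_neq0)).
Qed.

Lemma reduces_legendre_sum t u :
  reduces t u -> reduces (legendre_sum n t) (legendre_sum n u).
Proof.
move=> tu; apply: reducesM.
  exact: reducesV (reducesX _ (reduces_nat 2)) (expf_neq0 _ Fp_two_neq0).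
apply: reduces_sum => k _; apply: reducesM (reducesX _ tu).
have k2n : (2 * k <= n)%N by rewrite mul2n -geq_half_double -ltnS.
apply: reducesM; first apply: reducesM (reduces_nat _).
  by have := reducesX k (reducesN (reduces_nat 1)); rewrite mulr1n.
apply: reducesV; first by rewrite -!natrM; apply: reduces_nat.
by rewrite !mulf_neq0 ?fact_Fp_neq0_le ?leq_subr //; lia.
Qed.

End PrimeField.

Unset Implicit Arguments.

Theorem theorem2p8 (p : nat) (x : rat) :
  prime p -> odd p -> in_Zp p x -> ~~ congr_p p x 0 ->
  congr_p p
    (\sum_(k < (p.-1)./2.+1) ('C(2 * k, k)%:R) ^+ 2 * (x / 4%:R) ^+ (2 * k))
    ((legendre_rat p (- x))%:~R * (legendreP ((p.-1)./2)).[(x + x^-1) / 2%:R]).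
Proof.
move=> p_prime p_odd xZ x_neq0.
have pE : p = (2 * (p.-1)./2).+1.
  by have := odd_double_half p; rewrite p_odd add1n => {1 2}<-; rewrite /= doubleK mul2n.
set n := (p.-1)./2 in pE *.
have xy : reduces x (red p x) by [].
set y := red p x in xy.
have y0 : y != 0 by rewrite -(congr_p_reduces p_prime xy (reduces_nat p_prime 0)).
have half_sum : reduces ((x + x^-1) / 2%:R) ((y + y^-1) / 2%:R).
  have half := reducesV p_prime (reduces_nat p_prime 2) (Fp_two_neq0 p_prime pE).
  by have := reducesM p_prime (reducesD p_prime xy (reducesV p_prime xy y0)) half.
rewrite horner_legendreP (congr_p_reduces p_prime
  (reduces_central_bin_sqr_sum p_prime pE xy)
  (reducesM p_prime (reduces_int p_prime _) (reduces_legendre_sum p_prime pE half_sum))).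
by rewrite (legendre_rat_Fp p_prime pE (reducesN p_prime xy)) ?oppr_eq0 // Fp_central_bin_sqr_sum.
Qed.
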